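(* Let $X$ be an infinite h-homogeneous zero-dimensional compact Hausdorff space, let $\upsilon\in\Phi(X)$ and let $\tilde\alpha=\{A_1,\dots,A_m\}$ be a finite partition of $X$ into nonempty clopen sets. Then the relation $<_{\upsilon}$ on $\tilde\alpha$ defined by $A_i<_\upsilon A_j \iff (A_i)_\upsilon\subseteq (A_j)_\upsilon$ is a linear order on $\tilde\alpha$. Moreover, if $A_{i_1}<_\upsilon A_{i_2}<_\upsilon\dots<_\upsilon A_{i_m}$ is this ordering, then for each $k=1,\dots,m$ there is a point $x_k\in A_{i_k}$ with $(A_{i_k})_\upsilon\setminus (A_{i_1}\cup\dots\cup A_{i_{k-1}})^\upsilon=\{x_k\}$ (for $k=1$ the union is empty and the set subtracted is $\emptyset$).
   Context: h-homogeneous: every nonempty clopen subset of $X$ is homeomorphic to $X$. $\Phi(X)$ is the set of maximal chains (maximal families of nonempty closed subsets of $X$ totally ordered by inclusion). For $\upsilon\in\Phi(X)$ and a closed $D\subset X$: if $D\ne\emptyset$, $D_\upsilon=\bigcap\{A\in\upsilon: A\cap D\neq\emptyset\}$ (the least element of $\upsilon$ meeting $D$); and $D^\upsilon=\overline{\bigcup\{A\in\upsilon: A\subset D\}}$ (the largest element of $\upsilon$ contained in $D$ when the root of $\upsilon$ lies in $D$). *)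

From HB Require Import structures.
From mathcomp Require Import all_boot all_order all_algebra.
From mathcomp Require Import all_classical all_reals all_analysis.
Set Implicit Arguments. Unset Strict Implicit. Unset Printing Implicit Defensive.
Local Open Scope classical_set_scope.

Definition clopen_base (X : topologicalType) : Prop :=
  forall (U : set X) (x : X), open U -> U x ->
    exists V : set X, [/\ clopen V, V x & V `<=` U].

(* U (with the subspace topology) is homeomorphic to X: there are maps
   f : U -> X and g : X -> U, mutually inverse, both continuous. *)
Definition homeomorphic_to_space (X : topologicalType) (U : set X) : Prop :=
  exists f g : X -> X,
    [/\ {within U, continuous f}, continuous g,
        (forall y, U (g y)),
        (forall x, U x -> g (f x) = x) &
        (forall y, f (g y) = y)].

Definition h_homogeneous (X : topologicalType) : Prop :=
  forall U : set X, clopen U -> U !=set0 -> homeomorphic_to_space U.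

Definition closed_chain (X : topologicalType) (c : set (set X)) : Prop :=
  (forall A, c A -> closed A /\ A !=set0) /\
  (forall A B, c A -> c B -> A `<=` B \/ B `<=` A).

Definition maximal_chain (X : topologicalType) (c : set (set X)) : Prop :=
  closed_chain c /\ (forall d, closed_chain d -> c `<=` d -> d = c).

Definition chain_lower (X : topologicalType) (u : set (set X)) (D : set X) : set X :=
  \bigcap_(A in [set A | u A /\ A `&` D !=set0]) A.

Definition chain_upper (X : topologicalType) (u : set (set X)) (D : set X) : set X :=
  closure (\bigcup_(A in [set A | u A /\ A `<=` D]) A).

From HB Require Import structures.
From mathcomp Require Import all_boot all_order all_algebra.
From mathcomp Require Import all_classical all_reals all_analysis.
Local Open Scope classical_set_scope.

(* By compactness, for a clopen piece D of the partition D_u is the least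
   member of the maximal chain u meeting D, so every strictly smaller member
   of u misses the open set D.  Hence D_u minus the closure of the members
   strictly below it is nonempty; maximality of u forces this difference to be
   a single point x, since otherwise (closure of the smaller members) + {x}
   could be added to u.  Disjoint pieces give distinct points, hence distinct
   D_u, and the members of u contained in A_{i_1} + ... + A_{i_(k-1)} are
   exactly those strictly below (A_{i_k})_u, which identifies the set
   subtracted in the statement. *)

Definition chain_below {X : topologicalType} (u : set (set X)) (C : set X) :=
  closure (\bigcup_(B in [set B | u B /\ B `<=` C /\ ~ C `<=` B]) B).

Lemma chain_lower_sub (X : topologicalType) (u : set (set X)) (D B : set X) :
  u B -> B `&` D !=set0 -> chain_lower u D `<=` B.
Proof. by move=> uB BD x Lx; apply: Lx; split. Qed.

Lemma chain_below_disjoint (X : topologicalType) (u : set (set X)) (C D : set X) :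
  open D -> (forall B, u B -> ~ C `<=` B -> B `&` D = set0) ->
  chain_below u C `&` D = set0.
Proof.
move=> oD hB; apply/seteqP; split=> // y [Cy Dy].
have /Cy [z [[B [uB [_ nCB]] Bz] Dz]] : nbhs y D by apply: open_nbhs_nbhs.
by have : (B `&` D) z by []; rewrite hB.
Qed.

Section MaximalChain.
Context {X : topologicalType} {u : set (set X)}.
Hypothesis hu : maximal_chain u.

Lemma maximal_chain_closed A : u A -> closed A.
Proof. by case: hu => -[hcl _] _ /hcl []. Qed.

Lemma maximal_chain_total {A B} : u A -> u B -> A `<=` B \/ B `<=` A.
Proof. by case: hu => -[_ hch] _; apply: hch. Qed.

Lemma maximal_chain_extend C : closed C -> C !=set0 ->
  (forall B, u B -> B `<=` C \/ C `<=` B) -> u C.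
Proof.
move=> cC neC cmp; have [[hcl hch] hmax] := hu.
have cd : closed_chain (u `|` [set C]).
  split; first by move=> A [/hcl//|->].
  move=> A B [uA|->] [uB|->]; [exact: hch | exact: cmp | | by left].
  by case: (cmp _ uB) => h; [right|left].
by rewrite -(hmax _ cd (@subsetUl _ u [set C])); right.
Qed.

Lemma chain_lower_meets {D} : compact [set: X] -> closed D -> D !=set0 ->
  chain_lower u D `&` D !=set0.
Proof.
move=> hc cD [d Dd].
(* The traces on D of the members of u meeting D are nested, hence a base of
   a proper filter; a cluster point of it lies in all of them. *)
pose I := [set A | u A /\ A `&` D !=set0].
have IT : I setT.
  split; last by exists d.
  apply: maximal_chain_extend; [exact: closedT | by exists d | by left].
pose F := filter_from I (fun A => A `&` D).
have Fflt : Filter F.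
  apply: filter_from_filter; first by exists setT.
  move=> A B IA IB; case: (maximal_chain_total IA.1 IB.1) => AB;
    [exists A => // | exists B => //];
    by move=> x [Ax Dx]; split; split=> //; exact: AB.
have PF : ProperFilter F by apply: filter_from_proper => // A [].
have [p [_ clp]] := hc F PF (@filterT _ F _).
have pI A : I A -> (A `&` D) p.
  move=> [uA AD]; have cAD : closed (A `&` D).
    by apply: closedI => //; exact: maximal_chain_closed.
  rewrite [X in X p](closure_id (A `&` D)).1 // => B nB.
  by apply: clp => //; exists A.
by exists p; split; [move=> A /pI [] | exact: (pI _ IT).2].
Qed.

Lemma chain_lower_in_chain {D} : compact [set: X] -> closed D -> D !=set0 ->
  u (chain_lower u D).
Proof.
move=> hc cD neD; have [p [Lp _]] := chain_lower_meets hc cD neD.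
apply: maximal_chain_extend.
- by apply: closed_bigI => A [uA _]; exact: maximal_chain_closed.
- by exists p.
move=> B uB; case: (pselect (B `&` D !=set0)) => BD.
  by right; exact: chain_lower_sub.
left => x Bx A [uA [y [Ay Dy]]].
case: (maximal_chain_total uA uB) => [AB|]; last exact.
by exfalso; apply: BD; exists y; split => //; exact: AB.
Qed.

Lemma chain_below_sub {C} : u C -> chain_below u C `<=` C.
Proof.
move=> uC; rewrite [X in _ `<=` X](closure_id C).1; last exact: maximal_chain_closed.
by apply: closureS => y [B [_ [BC _]] /BC].
Qed.

(* If x and y both lay in C minus the part below it, the closed set
   (chain_below u C) + {x} would be a new member of u strictly below C,
   yet it contains x. *)
Lemma chain_below_diff_subsingleton {C x y} : accessible_space X -> u C ->
  (C `\` chain_below u C) x -> (C `\` chain_below u C) y -> y = x.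
Proof.
move=> hT1 uC [Cx nBx] [Cy nBy]; apply: contrapT => nyx.
pose E := chain_below u C `|` [set x].
have EC : E `<=` C by move=> z [/(chain_below_sub uC) | ->].
have uE : u E.
  apply: maximal_chain_extend.
  - by apply: closedU; [exact: closed_closure | exact: accessible_closed_set1].
  - by exists x; right.
  move=> B uB; case: (pselect (C `<=` B)) => CB; first by right; exact: subset_trans CB.
  case: (maximal_chain_total uB uC) => BC; last by exfalso; exact: CB.
  by left => z Bz; left; apply: subset_closure; exists B.
have nCE : ~ C `<=` E by move=> /(_ y Cy) [/nBy|/nyx].
by apply: nBx; apply: subset_closure; exists E => //; right.
Qed.

Lemma chain_lower_gap {D} : accessible_space X -> compact [set: X] ->
  clopen D -> D !=set0 ->
  exists x, D x /\ chain_lower u D `\` chain_below u (chain_lower u D) = [set x].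
Proof.
move=> hT1 hc [oD cD] neD; set L := chain_lower u D.
have uL : u L := chain_lower_in_chain hc cD neD.
have [x [Lx Dx]] := chain_lower_meets hc cD neD.
have LD : chain_below u L `&` D = set0.
  apply: chain_below_disjoint => // B uB nLB.
  apply/seteqP; split=> // z [Bz Dz]; apply: nLB.
  by apply: chain_lower_sub => //; exists z.
have LxB : (L `\` chain_below u L) x.
  by split=> // Bx; have : (chain_below u L `&` D) x by []; rewrite LD.
exists x; split=> //; apply/seteqP; split=> [y Ly|y ->] //.
exact: chain_below_diff_subsingleton hT1 uL LxB Ly.
Qed.

Lemma chain_lower_disjoint_neq {D D'} : accessible_space X -> compact [set: X] ->
  clopen D -> clopen D' -> D !=set0 -> D' !=set0 -> D `&` D' = set0 ->
  chain_lower u D <> chain_lower u D'.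
Proof.
move=> hT1 hc cD cD' neD neD' disj eqL.
have [x [Dx gapD]] := chain_lower_gap hT1 hc cD neD.
have [x' [Dx' gapD']] := chain_lower_gap hT1 hc cD' neD'.
have xx' : x = x'.
  by have : [set x] x by []; rewrite -gapD eqL gapD'.
have : (D `&` D') x by split=> //; rewrite xx'.
by rewrite disj.
Qed.

Lemma chain_upper_eq_below {U C} : u C -> ~ C `<=` U ->
  (forall B, u B -> ~ C `<=` B -> B `<=` U) -> chain_upper u U = chain_below u C.
Proof.
move=> uC nCU hB; rewrite /chain_upper /chain_below; congr closure.
apply: eq_bigcupl; split=> B.
- move=> [uB BU]; have nCB : ~ C `<=` B by move=> /subset_trans /(_ BU).
  by case: (maximal_chain_total uB uC).
- by move=> [uB [_ nCB]]; split=> //; exact: hB.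
Qed.

End MaximalChain.

Lemma chain_member_sub_pieces {X : topologicalType} {u : set (set X)}
    {I : Type} {A : I -> set X} {B C : set X} :
  (forall y, exists i, A i y) -> u B -> ~ C `<=` B ->
  B `<=` \bigcup_(i in [set i | ~ C `<=` chain_lower u (A i)]) A i.
Proof.
move=> cover uB nCB y By; have [i Ai] := cover y; exists i => // CL.
apply: nCB; apply: subset_trans CL _.
by apply: chain_lower_sub => //; exists y.
Qed.

Theorem proposition3p3 (X : topologicalType)
  (hT2 : hausdorff_space X) (hcpt : compact [set: X])
  (hzd : clopen_base X) (hinf : infinite_set [set: X])
  (hh : h_homogeneous X)
  (u : set (set X)) (hu : maximal_chain u)
  (m : nat) (A : 'I_m -> set X)
  (hAclopen : forall i, clopen (A i))
  (hAne : forall i, A i !=set0)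
  (hAdisj : forall i j, i != j -> A i `&` A j = set0)
  (hAcover : \bigcup_(i in [set: 'I_m]) A i = [set: X]) :
  (forall i, chain_lower u (A i) `<=` chain_lower u (A i)) /\
  (forall i j k, chain_lower u (A i) `<=` chain_lower u (A j) ->
     chain_lower u (A j) `<=` chain_lower u (A k) ->
     chain_lower u (A i) `<=` chain_lower u (A k)) /\
  (forall i j, chain_lower u (A i) `<=` chain_lower u (A j) ->
     chain_lower u (A j) `<=` chain_lower u (A i) -> i = j) /\
  (forall i j, chain_lower u (A i) `<=` chain_lower u (A j) \/
     chain_lower u (A j) `<=` chain_lower u (A i)) /\
  (forall s : 'I_m -> 'I_m, bijective s ->
     (forall k l : 'I_m, (k < l)%N ->
        chain_lower u (A (s k)) `<=` chain_lower u (A (s l))) ->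
     forall k : 'I_m, exists x : X,
       A (s k) x /\
       chain_lower u (A (s k)) `\`
         chain_upper u (\bigcup_(l in [set l : 'I_m | (l < k)%N]) A (s l))
       = [set x]).
Proof.
have hT1 := hausdorff_accessible hT2.
have cover y : exists i, A i y.
  have : (\bigcup_(i in [set: 'I_m]) A i) y by rewrite hAcover.
  by case=> i _; exists i.
have uL i : u (chain_lower u (A i)).
  by case: (hAclopen i) => _ cA; exact (chain_lower_in_chain hu hcpt cA (hAne i)).
split; first by move=> i.
split; first by move=> i j k; exact: subset_trans.
split.
  move=> i j ij ji; case: (eqVneq i j) => // /hAdisj disj; exfalso.
  apply: (chain_lower_disjoint_neq hu hT1 hcpt _ _ (hAne i) (hAne j) disj) => //.
  exact/seteqP.
split; first by move=> i j; apply: (maximal_chain_total hu (uL i) (uL j)).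
move=> s [g sg gs] mono k.
have [x [Ax gapx]] := chain_lower_gap hu hT1 hcpt (hAclopen (s k)) (hAne (s k)).
exists x; split=> //; rewrite (chain_upper_eq_below hu (uL (s k))) //.
- have [Lx _] : (chain_lower u (A (s k)) `\`
                 chain_below u (chain_lower u (A (s k)))) x by rewrite gapx.
  move=> /(_ x Lx) [l /= lk Alx].
  have nslk : s l != s k by apply/eqP => /(can_inj sg) lek; rewrite lek ltnn in lk.
  by have : (A (s l) `&` A (s k)) x by []; rewrite hAdisj.
- move=> B uB nCB y /(chain_member_sub_pieces cover uB nCB) [i nCi Ai].
  exists (g i); last by rewrite gs.
  rewrite /= ltnNge; apply/negP => kgi; apply: nCi; rewrite -(gs i).
  by move: kgi; rewrite leq_eqVlt => /orP [/eqP/val_inj -> | /mono].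
Qed.
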